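(* Let $Z\subset\mathbb{S}_3$ be a finite nonempty set of points. Then the following are equivalent: (i) $\alpha(Z)=\alpha(2Z)=\alpha(3Z)=\alpha(4Z)=1$; (ii) $Z=\{Q\}$ where $Q$ is the point $E_i\cap\widetilde{L_{ij}}$ for some distinct $i,j\in\{1,2,3\}$.
   Context: Let $P_1,P_2,P_3\in\mathbb{P}^2(\mathbb{C})$ be three general points and $f\colon\mathbb{S}_3\to\mathbb{P}^2$ the blow-up at them, with exceptional curves $E_i=f^{-1}(P_i)$; let $H$ be the pullback of the class of a line and $\mathbb{L}_3=3H-E_1-E_2-E_3=-K_{\mathbb{S}_3}$. For distinct $i,j$, $L_{ij}$ is the line through $P_i,P_j$ and $\widetilde{L_{ij}}$ its proper transform. For a finite set $Z\subset\mathbb{S}_3$ with ideal sheaf $\mathcal{I}_Z$ and a positive integer $m$, $\alpha(mZ)=\min\{d\ge 0:\ H^0(\mathbb{S}_3,d\mathbb{L}_3\otimes\mathcal{I}_Z^{(m)})\neq 0\}$, i.e. the least $d$ such that some effective divisor $D\in|d\mathbb{L}_3|$ has multiplicity at least $m$ at every point of $Z$. *)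

From HB Require Import structures.
From mathcomp Require Import all_boot all_order all_algebra.
From mathcomp Require Import mpoly.
From mathcomp Require Import complex.
From mathcomp Require Import Rstruct.
From Stdlib Require Rdefinitions.

Set Implicit Arguments.
Unset Strict Implicit.
Unset Printing Implicit Defensive.

Import Order.TTheory GRing.Theory Num.Theory.
Local Open Scope ring_scope.

Definition CC : closedFieldType := (Rdefinitions.R)[i].

Section BlowUp.
Variable C : fieldType.

(* P^2 has homogeneous coordinates x_0, x_1, x_2 and the three
   (general = non-collinear) points are the coordinate points
   P_1 = [1:0:0], P_2 = [0:1:0], P_3 = [0:0:1]  (indices 0,1,2 below).
   The affine chart around P_i is x_i = 1; its two affine coordinates (u, v)
   are the two other coordinates in increasing order of index. *)

Definition chart3 (T : Type) (i : 'I_3) (c a b : T) : 3.-tuple T :=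
  if val i == 0%N then [tuple c; a; b]
  else if val i == 1%N then [tuple a; c; b]
  else [tuple a; b; c].

Definition others (T : Type) (i : 'I_3) (x0 x1 x2 : T) : T * T :=
  if val i == 0%N then (x1, x2)
  else if val i == 1%N then (x0, x2)
  else (x0, x1).

Definition mult0_ge (G : {mpoly C[2]}) (m : nat) : Prop :=
  forall mon : 'X_{1..2}, (mdeg mon < m)%N -> G@_mon = 0.

(* Points of S_3 (representatives).
   - [Off x0 x1 x2] : the point of S_3 over [x0:x1:x2] in P^2 \ {P_1,P_2,P_3};
   - [OnE i a b]   : the point of E_i corresponding to the tangent direction
                     [a:b] at P_i, written in the chart coordinates (u,v) of
                     the affine chart x_i = 1 around P_i. *)
Inductive S3pt : Type :=
  | Off of C & C & C
  | OnE of 'I_3 & C & C.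

Definition valid_pt (Q : S3pt) : Prop :=
  match Q with
  | Off x0 x1 x2 =>
      ~ (x0 = 0 /\ x1 = 0 /\ x2 = 0) /\
      ~ (x1 = 0 /\ x2 = 0) /\ ~ (x0 = 0 /\ x2 = 0) /\ ~ (x0 = 0 /\ x1 = 0)
  | OnE _ a b => ~ (a = 0 /\ b = 0)
  end.

Definition same_pt (Q Q' : S3pt) : Prop :=
  match Q, Q' with
  | Off x0 x1 x2, Off y0 y1 y2 =>
      exists l : C, l != 0 /\ y0 = l * x0 /\ y1 = l * x1 /\ y2 = l * x2
  | OnE i a b, OnE i' a' b' =>
      i = i' /\ exists l : C, l != 0 /\ a' = l * a /\ b' = l * b
  | _, _ => False
  end.

(* The point Q = E_i \cap (proper transform of L_ij): the tangent direction
   at P_i of the line through P_i and P_j, i.e. the chart coordinates of P_j. *)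
Definition pt_E_L (i j : 'I_3) : S3pt :=
  let ej (l : nat) : C := if val j == l then 1 else 0 in
  let d := others i (ej 0%N) (ej 1%N) (ej 2%N) in
  OnE i d.1 d.2.

(* H^0(S_3, d L_3) \ {0}: nonzero forms F of degree 3d with multiplicity
   >= d at each P_i.  Such F defines the effective divisor
   D_F = f^*(V(F)) - d (E_1 + E_2 + E_3) in |d L_3|, and every effective
   divisor of |d L_3| arises this way. *)
Definition in_H0 (d : nat) (F : {mpoly C[3]}) : Prop :=
  F != 0 /\ F \is (3 * d)%N.-homog /\
  forall i : 'I_3, mult0_ge (comp_mpoly (chart3 i 1 'X_0 'X_1) F) d.

Definition multD_ge (d : nat) (F : {mpoly C[3]}) (Q : S3pt) (m : nat) : Prop :=
  match Q with
  | Off x0 x1 x2 =>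
      (* mult_Q(D_F) = multiplicity of F at f(Q); computed in the affine
         chart x_k = 1, where k is the first index with x_k <> 0 *)
      let k : 'I_3 := if x0 != 0 then inord 0 else if x1 != 0 then inord 1
                      else inord 2 in
      let xk := if val k == 0%N then x0 else if val k == 1%N then x1 else x2 in
      let y := others k (x0 / xk) (x1 / xk) (x2 / xk) in
      mult0_ge (comp_mpoly (chart3 k 1 (y.1%:MP + 'X_0) (y.2%:MP + 'X_1)) F) m
  | OnE i a b =>
      (* blow-up charts at P_i (affine coordinates u, v of x_i = 1):
         if a <> 0 : u = X0, v = (b/a + X1) X0, Q = origin, E_i = {X0 = 0};
         if a = 0  : u = (a/b + X0) X1, v = X1,  Q = origin, E_i = {X1 = 0}.
         The pulled back F equals (equation of E_i)^d * H, where H is a local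
         equation of D_F at Q. *)
      if a != 0 then
        exists H : {mpoly C[2]},
          comp_mpoly (chart3 i 1 'X_0 (((b / a)%:MP + 'X_1) * 'X_0)) F
            = 'X_0 ^+ d * H /\ mult0_ge H m
      else
        exists H : {mpoly C[2]},
          comp_mpoly (chart3 i 1 (((a / b)%:MP + 'X_0) * 'X_1) 'X_1) F
            = 'X_1 ^+ d * H /\ mult0_ge H m
  end.

Definition admissible (Z : seq S3pt) (m d : nat) : Prop :=
  exists F : {mpoly C[3]}, in_H0 d F /\ forall Q, List.In Q Z -> multD_ge d F Q m.

Definition alpha_is (Z : seq S3pt) (m k : nat) : Prop :=
  admissible Z m k /\ forall d, (d < k)%N -> ~ admissible Z m d.

End BlowUp.

Arguments Off {C}.
Arguments OnE {C}.

(* A divisor of |L_3| is cut out by a plane cubic F through P_1, P_2, P_3, and a nonzero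
   cubic has no point of multiplicity 4, so every point of Z lies on some E_i.  In a
   blow-up chart at P_i, the multiplicity of the divisor at the point of E_i with tangent
   direction [a : b] only depends on finitely many coefficients of F: multiplicity 4
   forces F = x_j x_k^2 ({i, j, k} = {1, 2, 3}) and [a : b] to be the direction of L_ij.
   Since F does not depend on the point, Z is the single point E_i ∩ L~_ij.  Conversely,
   x_j x_k^2 defines 2 L~_ij + L~_ik + 2 E_i + E_j, which has multiplicity 4 at that
   point, while |0 L_3| only contains the zero divisor. *)

From HB Require Import structures.
From mathcomp Require Import all_boot all_order all_algebra.
From mathcomp Require Import mpoly.
From mathcomp Require Import complex Rstruct.
From mathcomp Require Import ring.

Set Implicit Arguments.
Unset Strict Implicit.
Unset Printing Implicit Defensive.

Import Order.TTheory GRing.Theory Num.Theory.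
Local Open Scope ring_scope.

Definition mon2 (k l : nat) : 'X_{1..2} := [multinom [tuple k; l]].

Definition mon3 (a b c : nat) : 'X_{1..3} := [multinom [tuple a; b; c]].

Lemma mon2_eq k l k' l' : (mon2 k l == mon2 k' l') = (k == k') && (l == l').
Proof.
apply/eqP/andP => [/mnmP e | [/eqP-> /eqP->]] //.
by split; apply/eqP; [exact: (e ord0) | exact: (e ord_max)].
Qed.

Lemma mon2D k l k' l' : (mon2 k l + mon2 k' l')%MM = mon2 (k + k') (l + l').
Proof. by apply/mnmP => i; rewrite mnmDE; case: i => [[|[|]]]. Qed.

Lemma mdeg_mon2 k l : mdeg (mon2 k l) = (k + l)%N.
Proof. by rewrite mdegE !big_ord_recr big_ord0. Qed.

Lemma mon2_0 : mon2 0 0 = 0%MM.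
Proof. by apply/mnmP => i; rewrite mnm0E; case: i => [[|[|]]]. Qed.

Lemma mon3_val a b c (l : 'I_3) : mon3 a b c l = nth 0%N [:: a; b; c] l.
Proof. by case: l => -[|[|[|]]]. Qed.

Lemma mon3_eq a b c a' b' c' :
  (mon3 a b c == mon3 a' b' c') = ((a, b, c) == (a', b', c')).
Proof.
apply/eqP/eqP => [/mnmP e | [-> -> ->]] //.
have := e ord0; have := e (@Ordinal 3 1 isT); have := e ord_max.
by rewrite !mon3_val /= => -> -> ->.
Qed.

Lemma mon3_ind (P : 'X_{1..3} -> Prop) :
  (forall a b c, P (mon3 a b c)) -> forall m, P m.
Proof.
move=> hP m; suff -> : m = mon3 (m ord0) (m (@Ordinal 3 1 isT)) (m ord_max) by [].
apply/mnmP => -[[|[|[|//]]] Hi]; rewrite mon3_val /=; congr (m _); exact: val_inj.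
Qed.

Lemma mdeg_mon3 a b c : mdeg (mon3 a b c) = (a + b + c)%N.
Proof. by rewrite mdegE !big_ord_recr big_ord0 /= !mon3_val add0n. Qed.

(* Locked so that failing unifications between distinct coefficients stay cheap. *)
HB.lock Definition coef3 {C : nzRingType} (F : {mpoly C[3]}) (a b c : nat) : C :=
  F@_(mon3 a b c).

Lemma coef3E (C : nzRingType) (F : {mpoly C[3]}) a b c : coef3 F a b c = F@_(mon3 a b c).
Proof. by rewrite unlock. Qed.

Lemma scaled_monomial_uniq (R : nzRingType) n (F : {mpoly R[n]}) m m' :
  F != 0 -> F = F@_m *: 'X_[m] -> F = F@_m' *: 'X_[m'] -> m = m'.
Proof.
move=> F_neq0 Fm Fm'; apply/eqP; apply: contraNT F_neq0 => m_neq.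
have c0 : F@_m' = 0 by rewrite Fm mcoeffZ mcoeffX (negbTE m_neq) mulr0.
by rewrite Fm' c0 scale0r.
Qed.

Section Cubics.
Variable C : fieldType.

Lemma comp_mpoly_mon3 (x y z : {mpoly C[2]}) a b c :
  comp_mpoly [tuple x; y; z] 'X_[mon3 a b c] = x ^+ a * y ^+ b * z ^+ c.
Proof. by rewrite comp_mpolyX !big_ord_recr big_ord0 /= !mon3_val mul1r. Qed.

Lemma mpolyX_mon2 p q : ('X_0 ^+ p * 'X_1 ^+ q : {mpoly C[2]}) = 'X_[mon2 p q].
Proof.
rewrite !mpolyXn -mpolyXD; congr mpolyX.
by apply/mnmP => -[[|[|]] Hi] //=; rewrite mnmDE !mulmnE !mnm1E /= ?muln0 ?mul1n ?addn0.
Qed.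

Lemma X0_mon2 : 'X_0 = 'X_[mon2 1 0] :> {mpoly C[2]}.
Proof. by rewrite -mpolyX_mon2 expr1 expr0 mulr1. Qed.

Lemma X1_mon2 : 'X_1 = 'X_[mon2 0 1] :> {mpoly C[2]}.
Proof. by rewrite -mpolyX_mon2 expr0 mul1r expr1. Qed.

Definition cubic_exponents : seq (nat * nat * nat) :=
  [:: (3, 0, 0); (2, 1, 0); (2, 0, 1); (1, 2, 0); (1, 1, 1);
      (1, 0, 2); (0, 3, 0); (0, 2, 1); (0, 1, 2); (0, 0, 3)]%N.

Lemma cubic_exponent_ind (P : nat -> nat -> nat -> Prop) :
  (P 3 0 0 -> P 2 1 0 -> P 2 0 1 -> P 1 2 0 -> P 1 1 1 -> P 1 0 2 ->
   P 0 3 0 -> P 0 2 1 -> P 0 1 2 -> P 0 0 3 ->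
   forall a b c, a + b + c = 3 -> P a b c)%N.
Proof.
move=> ? ? ? ? ? ? ? ? ? ? a b c.
by case: a => [|[|[|[|a]]]]; case: b => [|[|[|[|b]]]]; case: c => [|[|[|[|c]]]];
  rewrite ?addnS ?addSn.
Qed.

Lemma mem_cubic_exponents a b c :
  ((a, b, c) \in cubic_exponents) = (a + b + c == 3)%N.
Proof.
apply/idP/eqP => [abc_in | ]; last by move: a b c; apply: cubic_exponent_ind.
have /allP/(_ _ abc_in)/eqP// :=
  (isT : all (fun t => t.1.1 + t.1.2 + t.2 == 3)%N cubic_exponents).
Qed.

Lemma cubic_expansion (F : {mpoly C[3]}) : F \is 3.-homog ->
  F = \sum_(t <- cubic_exponents) coef3 F t.1.1 t.1.2 t.2 *: 'X_[mon3 t.1.1 t.1.2 t.2].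
Proof.
move=> hF; apply/mpolyP; elim/mon3_ind => a b c.
rewrite raddf_sum /=; under eq_bigr do rewrite mcoeffZ mcoeffX coef3E.
have [abc3|abc_ne3] := eqVneq (a + b + c)%N 3.
  rewrite (bigD1_seq (a, b, c)) ?mem_cubic_exponents ?abc3 //= eqxx mulr1 big1 ?addr0 //.
  by case=> [[a' b'] c'] /= /negbTE; rewrite mon3_eq => ->; rewrite mulr0.
rewrite (dhomog_nemf_coeff hF) /= ?mdeg_mon3 // big1_seq // => -[[a' b'] c'] /=.
rewrite mem_cubic_exponents mon3_eq => /eqP sum3.
case: eqP => [[ea eb ec]|_]; last by rewrite mulr0.
by rewrite -ea -eb -ec sum3 eqxx in abc_ne3.
Qed.

Lemma cubic_monomial (F : {mpoly C[3]}) a b c : F \is 3.-homog ->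
  (forall a' b' c', (a' + b' + c' = 3)%N -> (a', b', c') != (a, b, c) ->
     coef3 F a' b' c' = 0) ->
  F = coef3 F a b c *: 'X_[mon3 a b c].
Proof.
move=> hF hcoef; apply/mpolyP; elim/mon3_ind => a' b' c'.
rewrite mcoeffZ mcoeffX mon3_eq coef3E.
have [[-> -> ->]|ne] := eqP; first by rewrite mulr1.
rewrite mulr0; have [sum3|sum_ne3] := eqVneq (a' + b' + c')%N 3.
  by rewrite -coef3E; apply: hcoef => //; apply/eqP => /esym.
by rewrite (dhomog_nemf_coeff hF) /= ?mdeg_mon3.
Qed.

Lemma cubic_eq0 (F : {mpoly C[3]}) : F \is 3.-homog ->
  (forall a b c, (a + b + c = 3)%N -> coef3 F a b c = 0) -> F = 0.
Proof.
move=> hF hcoef; rewrite (@cubic_monomial F 3 0 0) // ?hcoef ?scale0r //.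
by move=> a b c abc _; apply: hcoef.
Qed.

(* A term (fs, (k, l)) stands for (\prod fs) X0^k X1^l.  Products of term lists and their
   coefficients compute by simpl, which expands the coefficients of a cubic composed with
   the chart maps into explicit expressions; sumL and prodL avoid spurious 0s and 1s. *)
Fixpoint sumL (s : seq C) : C :=
  match s with [::] => 0 | [:: x] => x | x :: s' => x + sumL s' end.

Fixpoint prodL (s : seq C) : C :=
  match s with [::] => 1 | [:: x] => x | x :: s' => x * prodL s' end.

Lemma sumLE s : sumL s = \sum_(x <- s) x.
Proof.
elim: s => [|x [|y s] IH]; rewrite ?big_nil // big_cons; first by rewrite big_nil addr0.
by rewrite -IH.
Qed.

Lemma prodLE s : prodL s = \prod_(x <- s) x.
Proof.
elim: s => [|x [|y s] IH]; rewrite ?big_nil // big_cons; first by rewrite big_nil mulr1.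
by rewrite -IH.
Qed.

Lemma sumL_flatten (ss : seq (seq C)) : sumL (flatten ss) = \sum_(s <- ss) sumL s.
Proof.
elim: ss => [|s ss IH]; first by rewrite big_nil.
by rewrite big_cons /= sumLE big_cat -!sumLE IH.
Qed.

Local Notation term := (seq C * (nat * nat))%type.

Definition poly_of_terms (s : seq term) : {mpoly C[2]} :=
  \sum_(x <- s) prodL x.1 *: 'X_[mon2 x.2.1 x.2.2].

Definition mul_term (x y : term) : term := (x.1 ++ y.1, (x.2.1 + y.2.1, x.2.2 + y.2.2)%N).

Fixpoint mul_terms (s1 s2 : seq term) : seq term :=
  if s1 is x :: s1' then map (mul_term x) s2 ++ mul_terms s1' s2 else [::].

Fixpoint exp_terms (s : seq term) n : seq term :=
  if n is n'.+1 then mul_terms s (exp_terms s n') else [:: ([::], (0, 0)%N)].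

Definition has_exponent k l (x : term) := (x.2.1 == k) && (x.2.2 == l).

Lemma poly_of_terms_cons x s :
  poly_of_terms (x :: s) = prodL x.1 *: 'X_[mon2 x.2.1 x.2.2] + poly_of_terms s.
Proof. by rewrite /poly_of_terms big_cons. Qed.

Lemma poly_of_termsD s1 s2 :
  poly_of_terms (s1 ++ s2) = poly_of_terms s1 + poly_of_terms s2.
Proof. by rewrite /poly_of_terms big_cat. Qed.

Lemma poly_of_term_mon2 fs k l : poly_of_terms [:: (fs, (k, l))] = prodL fs *: 'X_[mon2 k l].
Proof. by rewrite poly_of_terms_cons /poly_of_terms big_nil addr0. Qed.

Lemma poly_of_terms1 : poly_of_terms [:: ([::], (0, 0)%N)] = 1.
Proof. by rewrite poly_of_term_mon2 scale1r mon2_0 mpolyX0. Qed.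

Lemma poly_of_termsC c : poly_of_terms [:: ([:: c], (0, 0)%N)] = c%:MP.
Proof. by rewrite poly_of_term_mon2 mon2_0 mpolyX0 -alg_mpolyC. Qed.

Lemma poly_of_termsX0 : poly_of_terms [:: ([::], (1, 0)%N)] = 'X_0.
Proof. by rewrite poly_of_term_mon2 scale1r X0_mon2. Qed.

Lemma poly_of_termsX1 : poly_of_terms [:: ([::], (0, 1)%N)] = 'X_1.
Proof. by rewrite poly_of_term_mon2 scale1r X1_mon2. Qed.

Lemma coef_poly_of_terms s k l :
  (poly_of_terms s)@_(mon2 k l) = \sum_(x <- s | has_exponent k l x) prodL x.1.
Proof.
elim: s => [|x s IH]; first by rewrite /poly_of_terms !big_nil mcoeff0.
rewrite poly_of_terms_cons mcoeffD mcoeffZ mcoeffX mon2_eq IH big_cons /has_exponent.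
by case: ifP; rewrite ?mulr1 ?mulr0 ?add0r.
Qed.

Lemma poly_of_terms_mul_term x s :
  poly_of_terms (map (mul_term x) s) = poly_of_terms [:: x] * poly_of_terms s.
Proof.
rewrite poly_of_terms_cons /poly_of_terms big_nil addr0.
elim: s => [|y s IH]; first by rewrite !big_nil mulr0.
rewrite /= !big_cons IH mulrDr; congr (_ + _).
by rewrite -scalerAl -scalerAr scalerA -mpolyXD mon2D !prodLE big_cat.
Qed.

Lemma poly_of_termsM s1 s2 :
  poly_of_terms (mul_terms s1 s2) = poly_of_terms s1 * poly_of_terms s2.
Proof.
elim: s1 => [|x s1 IH]; first by rewrite /poly_of_terms !big_nil mul0r.
by rewrite /= poly_of_termsD IH poly_of_terms_mul_term -mulrDl -poly_of_termsD.
Qed.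

Lemma poly_of_termsX s n : poly_of_terms (exp_terms s n) = poly_of_terms s ^+ n.
Proof. by elim: n => [|n IH]; rewrite ?poly_of_terms1 //= poly_of_termsM IH exprS. Qed.

Definition cubic_terms s0 s1 s2 (t : nat * nat * nat) : seq term :=
  mul_terms (mul_terms (exp_terms s0 t.1.1) (exp_terms s1 t.1.2)) (exp_terms s2 t.2).

Lemma coef_comp_cubic (F : {mpoly C[3]}) s0 s1 s2 k l : F \is 3.-homog ->
  (comp_mpoly [tuple poly_of_terms s0; poly_of_terms s1; poly_of_terms s2] F)@_(mon2 k l) =
  sumL (flatten [seq [seq prodL (coef3 F t.1.1 t.1.2 t.2 :: x.1)
                       | x <- cubic_terms s0 s1 s2 t & has_exponent k l x]
                 | t <- cubic_exponents]).
Proof.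
move=> hF; rewrite {1}(cubic_expansion hF) [comp_mpoly _ _]raddf_sum raddf_sum.
rewrite sumL_flatten big_map; apply: eq_bigr => t _ /=.
rewrite comp_mpolyZ comp_mpoly_mon3 -!poly_of_termsX -!poly_of_termsM mcoeffZ.
rewrite coef_poly_of_terms sumLE big_map big_filter mulr_sumr.
by apply: eq_bigr => -[[|a fs] kl] _ /=; rewrite ?mulr1.
Qed.

End Cubics.

Section Multiplicity.
Variable C : fieldType.

Lemma mult0_ge_coef (G : {mpoly C[2]}) n :
  mult0_ge G n -> forall k l, (k + l < n)%N -> G@_(mon2 k l) = 0.
Proof. by move=> hG k l kl; apply: hG; rewrite mdeg_mon2. Qed.

Lemma mult0_geX (m : 'X_{1..2}) n : (n <= mdeg m)%N -> mult0_ge ('X_[m] : {mpoly C[2]}) n.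
Proof.
move=> hn m' hm'; rewrite mcoeffX; case: eqP => // em.
by move: hm'; rewrite -em ltnNge hn.
Qed.

Lemma coef_X0_mul (H : {mpoly C[2]}) k l : ('X_0 * H)@_(mon2 k.+1 l) = H@_(mon2 k l).
Proof. by rewrite X0_mon2 mulrC -[k.+1]add1n -[l in mon2 _ l]add0n -mon2D mcoeffMX. Qed.

Lemma coef_X1_mul (H : {mpoly C[2]}) k l : ('X_1 * H)@_(mon2 k l.+1) = H@_(mon2 k l).
Proof. by rewrite X1_mon2 mulrC -[l.+1]add1n -[k in mon2 k _]add0n -mon2D mcoeffMX. Qed.

End Multiplicity.

Ltac expand_coef_eq e := rewrite coef_comp_cubic /= in e; [|done].

(* For [E : forall k l, k + l < 4 -> G@_(mon2 k l) = 0], [e_kl] is [E k l] with the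
   coefficient expanded. *)
Ltac coef_eqs E :=
  pose proof (E 0%N 0%N isT) as e00; pose proof (E 1%N 0%N isT) as e10;
  pose proof (E 0%N 1%N isT) as e01; pose proof (E 2%N 0%N isT) as e20;
  pose proof (E 1%N 1%N isT) as e11; pose proof (E 0%N 2%N isT) as e02;
  pose proof (E 3%N 0%N isT) as e30; pose proof (E 2%N 1%N isT) as e21;
  pose proof (E 1%N 2%N isT) as e12; pose proof (E 0%N 3%N isT) as e03; clear E;
  expand_coef_eq e00; expand_coef_eq e10; expand_coef_eq e01; expand_coef_eq e20;
  expand_coef_eq e11; expand_coef_eq e02; expand_coef_eq e30; expand_coef_eq e21;
  expand_coef_eq e12; expand_coef_eq e03.

Ltac propagate_zero_coefs :=
  repeat match goal with
  | H : coef3 ?p ?a ?b ?c = 0 |- _ =>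
     match goal with H' : context[coef3 p a b c] |- _ =>
        lazymatch H' with H => fail | _ =>
          rewrite H ?(mul0r, add0r, addr0) in H' end end
  end.

Ltac to_terms E :=
  rewrite -?poly_of_termsX0 -?poly_of_termsX1 -?poly_of_termsC -?poly_of_terms1
          -?poly_of_termsD -?poly_of_termsM in E.

Definition other_idx (i : 'I_3) : 'I_3 * 'I_3 :=
  others i (@Ordinal 3 0 isT) (@Ordinal 3 1 isT) (@Ordinal 3 2 isT).

Definition mnm_E_L (i j : 'I_3) : 'X_{1..3} :=
  let e l := (if l == val i then 0 else if l == val j then 1 else 2)%N in
  mon3 (e 0%N) (e 1%N) (e 2%N).

Section PointsOfMultiplicityFour.
Variable C : fieldType.

Lemma cubic_mult4_eq0 (F : {mpoly C[3]}) (k : 'I_3) (y1 y2 : C) : F \is 3.-homog ->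
  mult0_ge (comp_mpoly (chart3 k 1 (y1%:MP + 'X_0) (y2%:MP + 'X_1)) F) 4 -> F = 0.
Proof.
move=> hF /mult0_ge_coef E; to_terms E; apply: cubic_eq0 => //.
case: k E => [[|[|[|//]]] Hk] E; rewrite /chart3 /= in E; coef_eqs E; propagate_zero_coefs.
all: exact: cubic_exponent_ind.
Qed.

Lemma in_H0_coef_corners (F : {mpoly C[3]}) : in_H0 1 F ->
  [/\ coef3 F 3 0 0 = 0, coef3 F 0 3 0 = 0 & coef3 F 0 0 3 = 0].
Proof.
case=> _ [hF hP]; rewrite muln1 in hF.
have E i := mult0_ge_coef (hP i); to_terms E.
have e0 := E ord0 0%N 0%N isT; have e1 := E (@Ordinal 3 1 isT) 0%N 0%N isT.
have e2 := E ord_max 0%N 0%N isT.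
rewrite /chart3 /= in e0 e1 e2; expand_coef_eq e0; expand_coef_eq e1; expand_coef_eq e2.
by split.
Qed.

Lemma quadratic_double_root (A B t : C) :
  A * t + B * t ^+ 2 = 0 -> A + B * t *+ 2 = 0 -> t = 0 /\ A = 0 \/ A = 0 /\ B = 0.
Proof.
move=> e0 e1; have : B * t ^+ 2 = 0.
  have -> : B * t ^+ 2 = (A + B * t *+ 2) * t - (A * t + B * t ^+ 2) by ring.
  by rewrite e0 e1 mul0r subr0.
move/eqP; rewrite mulf_eq0 expf_eq0 /= => /orP[/eqP B0 | /eqP t0].
  by right; move: e1; rewrite B0 mul0r mul0rn addr0.
by left; move: e1; rewrite t0 mulr0 mul0rn addr0.
Qed.

Lemma blowup_chart_u (F : {mpoly C[3]}) (i : 'I_3) (t : C) (H : {mpoly C[2]}) :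
  in_H0 1 F -> comp_mpoly (chart3 i 1 'X_0 ((t%:MP + 'X_1) * 'X_0)) F = 'X_0 * H ->
  mult0_ge H 4 ->
  t = 0 /\ F = F@_(mnm_E_L i (other_idx i).1) *: 'X_[mnm_E_L i (other_idx i).1].
Proof.
move=> hF0 eH /mult0_ge_coef E; have [c300 c030 c003] := in_H0_coef_corners hF0.
case: hF0 => F_neq0 [hF _]; rewrite muln1 in hF.
have {}E k l (kl : (k + l < 4)%N) := etrans (coef_X0_mul H k l) (E k l kl).
rewrite -eH in E; to_terms E; clear eH.
case: i E => [[|[|[|//]]] Hi] E; rewrite /chart3 /= in E; coef_eqs E; propagate_zero_coefs.
(* e20 and e21 say that the cubic part of F restricted to v = s u has a double root at t. *)
all: rewrite -expr2 in e20; rewrite -mulr2n in e21.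
all: have [[t0 c021] | [c021 c012]] := quadratic_double_root e20 e21.
all: try by case/negP: F_neq0; apply/eqP; apply: cubic_eq0 => //; exact: cubic_exponent_ind.
all: split=> //; rewrite /mnm_E_L /= -coef3E.
all: by apply: cubic_monomial => //; apply: cubic_exponent_ind => //= _.
Qed.

Lemma blowup_chart_v (F : {mpoly C[3]}) (i : 'I_3) (H : {mpoly C[2]}) :
  in_H0 1 F -> comp_mpoly (chart3 i 1 ('X_0 * 'X_1) 'X_1) F = 'X_1 * H ->
  mult0_ge H 4 -> F = F@_(mnm_E_L i (other_idx i).2) *: 'X_[mnm_E_L i (other_idx i).2].
Proof.
move=> hF0 eH /mult0_ge_coef E; have [c300 c030 c003] := in_H0_coef_corners hF0.
case: hF0 => F_neq0 [hF _]; rewrite muln1 in hF.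
have {}E k l (kl : (k + l < 4)%N) := etrans (coef_X1_mul H k l) (E k l kl).
rewrite -eH in E; to_terms E; clear eH.
case: i E => [[|[|[|//]]] Hi] E; rewrite /chart3 /= in E; coef_eqs E; propagate_zero_coefs.
all: rewrite /mnm_E_L /= -coef3E.
all: by apply: cubic_monomial => //; apply: cubic_exponent_ind => //= _.
Qed.

Lemma other_idx_neq (i : 'I_3) : i != (other_idx i).1 /\ i != (other_idx i).2.
Proof. by case: i => [[|[|[|//]]] ?]. Qed.

Lemma other_idxP (i j : 'I_3) : i != j -> j = (other_idx i).1 \/ j = (other_idx i).2.
Proof.
case: i j => [[|[|[|//]]] ?] [[|[|[|//]]] ?] //= _;
  by [left; apply: val_inj | right; apply: val_inj].
Qed.

Lemma pt_E_L_other_idx (i : 'I_3) :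
  pt_E_L C i (other_idx i).1 = OnE i 1 0 /\ pt_E_L C i (other_idx i).2 = OnE i 0 1.
Proof. by case: i => [[|[|[|//]]] ?]. Qed.

Lemma mult4_on_exceptional (F : {mpoly C[3]}) (i : 'I_3) (a b : C) :
  in_H0 1 F -> ~ (a = 0 /\ b = 0) -> multD_ge 1 F (OnE i a b) 4 ->
  exists j, [/\ i != j, same_pt (OnE i a b) (pt_E_L C i j)
               & F = F@_(mnm_E_L i j) *: 'X_[mnm_E_L i j]].
Proof.
move=> hF0 ab_neq0 hQ; have [ne1 ne2] := other_idx_neq i.
have [pt1 pt2] := pt_E_L_other_idx i.
have [a0 | a_neq0] := eqVneq a 0; move: hQ; rewrite /multD_ge.
  rewrite a0 eqxx mul0r mpolyC0 add0r expr1 => -[H [eH mH]].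
  have b_neq0 : b != 0 by apply/eqP => b0; apply: ab_neq0.
  exists (other_idx i).2; split=> //; last exact: blowup_chart_v eH mH.
  by rewrite pt2; split=> //; exists b^-1; rewrite invr_eq0 mulr0 mulVf.
rewrite a_neq0 expr1 => -[H [eH mH]]; have [t0 FE] := blowup_chart_u hF0 eH mH.
have b0 : b = 0 by move/eqP: t0; rewrite mulf_eq0 invr_eq0 (negbTE a_neq0) orbF => /eqP.
exists (other_idx i).1; split=> //.
by rewrite pt1 b0; split=> //; exists a^-1; rewrite invr_eq0 mulr0 mulVf.
Qed.

Lemma mult4_point (F : {mpoly C[3]}) (Q : S3pt C) :
  valid_pt Q -> in_H0 1 F -> multD_ge 1 F Q 4 ->
  exists i j, [/\ i != j, same_pt Q (pt_E_L C i j)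
                 & F = F@_(mnm_E_L i j) *: 'X_[mnm_E_L i j]].
Proof.
case: Q => [x0 x1 x2 | i a b] Q_valid hF0 hQ.
  by case/negP: (proj1 hF0); apply/eqP; exact: cubic_mult4_eq0 (proj1 (proj2 hF0)) hQ.
by have [j ?] := mult4_on_exceptional hF0 Q_valid hQ; exists i, j.
Qed.

End PointsOfMultiplicityFour.

Lemma mnm_E_L_inj (i j i' j' : 'I_3) :
  i != j -> i' != j' -> mnm_E_L i j = mnm_E_L i' j' -> i = i' /\ j = j'.
Proof.
move=> + + /eqP; rewrite /mnm_E_L mon3_eq.
case: i j i' j' => [[|[|[|//]]] ?] [[|[|[|//]]] ?] [[|[|[|//]]] ?] [[|[|[|//]]] ?] //= _ _ _;
  by split; apply: val_inj.
Qed.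

Section Converse.
Variable C : fieldType.

Lemma in_H0_mnm_E_L (i j : 'I_3) : i != j -> in_H0 1 ('X_[mnm_E_L i j] : {mpoly C[3]}).
Proof.
move=> ij; split; [|split].
- apply/eqP => /(congr1 (mcoeff (mnm_E_L i j))).
  by rewrite mcoeffX eqxx mcoeff0 => /eqP; rewrite oner_eq0.
- by rewrite dhomogX /= /mnm_E_L mdeg_mon3; case: i j ij => [[|[|[|//]]] ?] [[|[|[|//]]] ?].
case: i j ij => [[|[|[|//]]] ?] [[|[|[|//]]] ?] //= _ [[|[|[|//]]] ?];
  rewrite /chart3 /mnm_E_L /= comp_mpoly_mon3 expr1n ?mul1r ?mulr1 !mpolyXn -?mpolyXD;
  by apply: mult0_geX; rewrite ?mdegD ?mdegMn ?mdeg1.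
Qed.

Lemma same_pt_OnE (i i' : 'I_3) (a b a' b' : C) :
  same_pt (OnE i a b) (OnE i' a' b') -> [/\ i = i', (a == 0) = (a' == 0) & (b == 0) = (b' == 0)].
Proof. by case=> -> [l [l_neq0 [-> ->]]]; rewrite !mulf_eq0 (negbTE l_neq0). Qed.

Lemma mult4_at_pt_E_L (i j : 'I_3) (Q : S3pt C) n :
  i != j -> same_pt Q (pt_E_L C i j) -> (n <= 4)%N ->
  multD_ge 1 ('X_[mnm_E_L i j] : {mpoly C[3]}) Q n.
Proof.
have [pt1 pt2] := pt_E_L_other_idx C i.
move=> /other_idxP[->|->]; [rewrite pt1 | rewrite pt2]; case: Q => [? ? ?|i' a b] //=.
all: case/same_pt_OnE => -> + + hn {pt1 pt2}; rewrite oner_eq0 eqxx.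
1: move=> a_neq0 /eqP ->; rewrite a_neq0.
2: move=> /eqP -> _; rewrite eqxx.
all: rewrite /= mul0r mpolyC0 add0r expr1; exists 'X_[mon2 2 2].
all: split; last by apply: mult0_geX; rewrite mdeg_mon2.
all: by case: i => [[|[|[|//]]] ?]; rewrite /chart3 /mnm_E_L /= comp_mpoly_mon3 -mpolyX_mon2; ring.
Qed.

Lemma not_admissible0 (Z : seq (S3pt C)) n : Z <> [::] -> (0 < n)%N -> ~ admissible Z n 0.
Proof.
case: Z => [//|Q Z] _ n_gt0 [F [[F_neq0 [hF _]] /(_ Q (or_introl erefl)) hQ]].
have FC : F = (F@_0%MM)%:MP.
  apply/mpolyP => m; rewrite mcoeffC; have [->|m_neq0] := eqVneq m 0%MM; first by rewrite mulr1.
  by rewrite mulr0 (dhomog_nemf_coeff hF) //= muln0 mdeg_eq0.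
rewrite FC in F_neq0 hQ; move: (F@_0%MM) F_neq0 hQ => c c_neq0 hQ.
have const_mult0 : mult0_ge (c%:MP : {mpoly C[2]}) n -> c = 0.
  by move=> /(_ 0%MM); rewrite mcoeffC eqxx mulr1 mdeg0; apply.
suff c0 : c = 0 by rewrite c0 mpolyC0 eqxx in c_neq0.
case: Q hQ => [? ? ? | i a b] /=; first by rewrite comp_mpolyC.
by case: ifP => _ [H []]; rewrite comp_mpolyC expr0 mul1r => <-.
Qed.

End Converse.

Unset Implicit Arguments.

Theorem theorem8 (Z : seq (S3pt CC)) :
  (forall Q, List.In Q Z -> valid_pt Q) -> Z <> [::] ->
  ((alpha_is Z 1 1 /\ alpha_is Z 2 1 /\ alpha_is Z 3 1 /\ alpha_is Z 4 1) <->
   exists i j : 'I_3, i <> j /\ forall Q, List.In Q Z -> same_pt Q (pt_E_L CC i j)).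
Proof.
move=> Z_valid Z_neq_nil; split.
  case=> _ [_ [_ [[F [hF0 hZ]] _]]].
  have pt_of Q (QZ : List.In Q Z) := mult4_point (Z_valid Q QZ) hF0 (hZ Q QZ).
  case: Z Z_neq_nil Z_valid hZ pt_of => [//|Q0 Z] _ _ _ pt_of.
  have [i0 [j0 [ij0 _ F_ij0]]] := pt_of Q0 (or_introl erefl).
  exists i0, j0; split; first exact/eqP.
  move=> Q /pt_of[i [j [ij Q_ij F_ij]]].
  have [<- <-] := mnm_E_L_inj ij ij0 (scaled_monomial_uniq (proj1 hF0) F_ij F_ij0).
  exact: Q_ij.
case=> i [j [/eqP ij Z_ij]].
have alpha1 n : (0 < n <= 4)%N -> alpha_is Z n 1.
  case/andP=> n_gt0 n_le4; split.
    exists 'X_[mnm_E_L i j]; split; first exact: in_H0_mnm_E_L.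
    by move=> Q /Z_ij Q_ij; exact: mult4_at_pt_E_L Q_ij n_le4.
  by move=> d; rewrite ltnS leqn0 => /eqP ->; exact: not_admissible0.
by split; [|split; [|split]]; apply: alpha1.
Qed.
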